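(* Let $X$ be a countable infinite set, $\mathcal{I}$ a hereditarily meager ideal on $X$, and $\tau$ an $\mathcal{I}$-crowded topology on $X$ with $w(\tau)<\mathfrak{m}_c$. Suppose $A\subseteq X$ is $(\mathcal{I},\tau)$-crowded. Then there is a partition $A=\bigcup_{m\in\omega}A_m$ such that each $A_m$ is $(\mathcal{I},\tau)$-crowded and dense in $A$.
   Context: An ideal on $X$ is a family of subsets of $X$ closed under subsets and finite unions; all ideals are assumed proper ($X\notin\mathcal{I}$) and free (every finite subset of $X$ is in $\mathcal{I}$). $\mathcal{I}^+=\mathcal{P}(X)\setminus\mathcal{I}$. Subsets of $X$ are identified with points of $2^X$ (product topology). $\mathcal{I}$ is hereditarily meager (HM) if for every $A\in\mathcal{I}^+$, $\mathcal{I}\cap\mathcal{P}(A)$ is meager in $2^A$. A topology $\tau$ on $X$ is $\mathcal{I}$-crowded if $\tau\cap\mathcal{I}=\{\emptyset\}$. A set $A\subseteq X$ is $(\mathcal{I},\tau)$-crowded if for every $U\in\tau$, $A\cap U$ is either empty or belongs to $\mathcal{I}^+$. $\mathfrak{m}_c$ is the least cardinal $\kappa$ such that Martin's Axiom MA$(\kappa)$ for countable posets fails. $w$ denotes weight. *)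

From Stdlib Require Import List.
Import ListNotations.

Definition subset {X : Type} (A B : X -> Prop) : Prop := forall x, A x -> B x.
Definition inter {X : Type} (A B : X -> Prop) : X -> Prop := fun x => A x /\ B x.
Definition union {X : Type} (A B : X -> Prop) : X -> Prop := fun x => A x \/ B x.
Definition is_empty {X : Type} (A : X -> Prop) : Prop := forall x, ~ A x.
Definition finite_set {X : Type} (A : X -> Prop) : Prop :=
  exists l : list X, forall x, A x -> In x l.

Definition countably_infinite (X : Type) : Prop :=
  exists f : nat -> X, (forall m n, f m = f n -> m = n) /\ (forall x, exists n, f n = x).

Definition is_ideal {X : Type} (I : (X -> Prop) -> Prop) : Prop :=
  (forall A B, I A -> subset B A -> I B) /\
  (forall A B, I A -> I B -> I (union A B)) /\
  ~ I (fun _ => True) /\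
  (forall A, finite_set A -> I A).

(* Cantor space 2^A: points are subsets B of A.  A nonempty basic open set
   is given by two disjoint finite lists pos, neg of elements of A:
   [pos,neg] = {B subset A | pos subset B, neg disjoint from B}. *)
Definition basic_cond {X : Type} (A : X -> Prop) (pos neg : list X) : Prop :=
  (forall x, In x pos -> A x) /\ (forall x, In x neg -> A x) /\
  (forall x, In x pos -> ~ In x neg).

Definition in_cylinder {X : Type} (pos neg : list X) (B : X -> Prop) : Prop :=
  (forall x, In x pos -> B x) /\ (forall x, In x neg -> ~ B x).

Definition nowhere_dense_in_cantor {X : Type} (A : X -> Prop)
    (F : (X -> Prop) -> Prop) : Prop :=
  forall pos neg, basic_cond A pos neg ->
    exists pos' neg', basic_cond A pos' neg' /\
      incl pos pos' /\ incl neg neg' /\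
      forall B, subset B A -> in_cylinder pos' neg' B -> ~ F B.

Definition meager_in_cantor {X : Type} (A : X -> Prop)
    (F : (X -> Prop) -> Prop) : Prop :=
  exists N : nat -> (X -> Prop) -> Prop,
    (forall n, nowhere_dense_in_cantor A (N n)) /\
    (forall B, subset B A -> F B -> exists n, N n B).

Definition hereditarily_meager {X : Type} (I : (X -> Prop) -> Prop) : Prop :=
  forall A : X -> Prop, ~ I A ->
    meager_in_cantor A (fun B => subset B A /\ I B).

Definition is_topology {X : Type} (T : (X -> Prop) -> Prop) : Prop :=
  T (fun _ => False) /\ T (fun _ => True) /\
  (forall U V, T U -> T V -> T (inter U V)) /\
  (forall F : (X -> Prop) -> Prop, (forall U, F U -> T U) ->
     T (fun x => exists U, F U /\ U x)).

Definition is_base {X J : Type} (T : (X -> Prop) -> Prop) (b : J -> X -> Prop) : Prop :=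
  (forall j, T (b j)) /\
  (forall U x, T U -> U x -> exists j, b j x /\ subset (b j) U).

Definition MA_countable (K : Type) : Prop :=
  forall (P : Type) (le : P -> P -> Prop),
    (forall p, le p p) ->
    (forall p q r, le p q -> le q r -> le p r) ->
    (forall p q, le p q -> le q p -> p = q) ->
    (exists g : P -> nat, forall p q, g p = g q -> p = q) ->
    inhabited P ->
    forall D : K -> P -> Prop,
      (forall k p, exists q, le q p /\ D k q) ->
      exists G : P -> Prop,
        (exists p, G p) /\
        (forall p q, G p -> le p q -> G q) /\
        (forall p q, G p -> G q -> exists r, G r /\ le r p /\ le r q) /\
        (forall k, exists p, G p /\ D k p).

(* w(T) < m_c, where m_c = least cardinal kappa for which MA(kappa) for
   countable posets fails.  Unfolded without cardinals:
   kappa < m_c  iff  MA(lambda) holds for every lambda <= kappa;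
   and w(T) <= |J| for a base indexed by J, with equality for a minimal base. *)
Definition weight_lt_mc {X : Type} (T : (X -> Prop) -> Prop) : Prop :=
  exists (J : Type) (b : J -> X -> Prop), is_base T b /\
    forall (K : Type) (h : K -> J), (forall k k', h k = h k' -> k = k') ->
      MA_countable K.

Definition I_crowded_topology {X : Type} (I T : (X -> Prop) -> Prop) : Prop :=
  forall U, T U -> I U -> is_empty U.

Definition IT_crowded {X : Type} (I T : (X -> Prop) -> Prop) (A : X -> Prop) : Prop :=
  forall U, T U -> is_empty (inter A U) \/ ~ I (inter A U).

Definition dense_in {X : Type} (T : (X -> Prop) -> Prop) (B A : X -> Prop) : Prop :=
  forall U, T U -> (exists x, A x /\ U x) -> exists x, B x /\ U x.

(* Enumerate X as (fX n)_n and force with Cohen conditions: finite sequences of colours for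
   an initial segment of the enumeration.  Fix a base (b j)_(j : J) of T.  When the trace
   C_j = A ∩ b_j is I-positive, hereditary meagerness covers I ∩ P(C_j) by nowhere dense sets
   N_(j,n), and for every colour m the conditions forcing the m-th colour class of C_j out of
   N_(j,n) are dense.  These are |J × ω × ω| dense sets in a countable poset; this cardinal is
   |J| when J is uncountable (Zorn) and countable otherwise, so MA, resp. the Rasiowa–Sikorski
   lemma, yields a filter meeting them all.  In the resulting colouring f every colour class
   meets every I-positive C_j in an I-positive set, which makes the classes A ∩ f⁻¹(m)
   (I,T)-crowded and dense in A. *)

From Stdlib Require Import List Arith Lia Cantor FinFun Classical ClassicalEpsilon.
From mathcomp Require classical_sets.
Import ListNotations.

Lemma filter_prop {A : Type} (P : A -> Prop) (l : list A) :
  exists l', forall x, In x l' <-> In x l /\ P x.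
Proof.
  induction l as [|a l [l' Hl']].
  - exists []. simpl. tauto.
  - destruct (classic (P a)) as [Pa|nPa].
    + exists (a :: l'). intros x. simpl. rewrite Hl'. split; [intros [<-|]|]; tauto.
    + exists l'. intros x. simpl. rewrite Hl'. split; [tauto|]. intros [[<-|] ?]; tauto.
Qed.

Section SelfProduct.
Variable J : Type.

Definition pairing_dom (R : J * nat * J -> Prop) (j : J) : Prop :=
  exists k y, R ((j, k), y).

(* [R] is the graph of a bijection from [pairing_dom R × nat] onto [pairing_dom R]. *)
Definition pairing (R : J * nat * J -> Prop) : Prop :=
  (forall x y y', R (x, y) -> R (x, y') -> y = y') /\
  (forall x x' y, R (x, y) -> R (x', y) -> x = x') /\
  (forall j k, pairing_dom R j -> exists y, R ((j, k), y)) /\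
  (forall y, (exists x, R (x, y)) <-> pairing_dom R y).

Lemma pairing_chain_union (F : (J * nat * J -> Prop) -> Prop) :
  (forall R, F R -> pairing R) ->
  (forall R R', F R -> F R' -> (forall t, R t -> R' t) \/ (forall t, R' t -> R t)) ->
  pairing (fun t => exists2 R, F R & R t).
Proof.
  intros HF Htot.
  assert (common : forall t t' R R', F R -> F R' -> R t -> R' t' ->
                     exists2 S, F S & S t /\ S t').
  { intros t t' R R' FR FR' Rt Rt'.
    destruct (Htot R R' FR FR') as [sub|sub]; [exists R'|exists R]; auto. }
  split; [|split; [|split]].
  - intros x y y' [R FR Ry] [R' FR' Ry'].
    destruct (common _ _ _ _ FR FR' Ry Ry') as [S FS [Sy Sy']].
    exact (proj1 (HF S FS) _ _ _ Sy Sy').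
  - intros x x' y [R FR Rx] [R' FR' Rx'].
    destruct (common _ _ _ _ FR FR' Rx Rx') as [S FS [Sx Sx']].
    exact (proj1 (proj2 (HF S FS)) _ _ _ Sx Sx').
  - intros j k [k' [y [R FR Ry]]].
    destruct (proj1 (proj2 (proj2 (HF R FR))) j k (ex_intro _ k' (ex_intro _ y Ry)))
      as [y' Ry'].
    exists y', R; auto.
  - intros y. split.
    + intros [x [R FR Rx]].
      destruct (proj1 (proj2 (proj2 (proj2 (HF R FR))) y) (ex_intro _ x Rx))
        as [k [y' Ry']].
      exists k, y', R; auto.
    + intros [k [y' [R FR Ry']]].
      destruct (proj2 (proj2 (proj2 (proj2 (HF R FR))) y) (ex_intro _ k (ex_intro _ y' Ry')))
        as [x Rx].
      exists x, R; auto.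
Qed.

Lemma pairing_union (R R' : J * nat * J -> Prop) :
  pairing R -> pairing R' -> (forall j, pairing_dom R j -> ~ pairing_dom R' j) ->
  pairing (fun t => R t \/ R' t).
Proof.
  intros [Rfun [Rinj [Rdom Rran]]] [Rfun' [Rinj' [Rdom' Rran']]] disj.
  split; [|split; [|split]].
  - intros [j k] y y' [Ry|Ry] [Ry'|Ry']; eauto;
      exfalso; apply (disj j); do 2 eexists; eassumption.
  - intros x x' y [Rx|Rx] [Rx'|Rx']; eauto; exfalso; apply (disj y);
      [apply Rran | apply Rran' | apply Rran | apply Rran']; eexists; eassumption.
  - intros j k [k' [y [Ry|Ry]]].
    + destruct (Rdom j k) as [y' ?]; [do 2 eexists; eassumption|]. exists y'; auto.
    + destruct (Rdom' j k) as [y' ?]; [do 2 eexists; eassumption|]. exists y'; auto.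
  - intros y. split.
    + intros [x [Rx|Rx]].
      * destruct (proj1 (Rran y) (ex_intro _ x Rx)) as [k [y' ?]]. exists k, y'; auto.
      * destruct (proj1 (Rran' y) (ex_intro _ x Rx)) as [k [y' ?]]. exists k, y'; auto.
    + intros [k [y' [Ry|Ry]]].
      * destruct (proj2 (Rran y) (ex_intro _ k (ex_intro _ y' Ry))) as [x ?]. exists x; auto.
      * destruct (proj2 (Rran' y) (ex_intro _ k (ex_intro _ y' Ry))) as [x ?]. exists x; auto.
Qed.

Lemma pairing_of_injection (e : nat -> J) : Injective e ->
  pairing (fun t => exists a k, t = ((e a, k), e (to_nat (a, k)))).
Proof.
  intros einj.
  assert (to_nat_inj : Injective to_nat).
  { intros p q E. rewrite <- (cancel_of_to p), <- (cancel_of_to q), E. reflexivity. }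
  split; [|split; [|split]].
  - intros x y y' [a [k E]] [a' [k' E']]. injection E as -> ->.
    injection E' as Ea -> ->. apply einj in Ea as ->. reflexivity.
  - intros x x' y [a [k E]] [a' [k' E']].
    assert (Q : (a, k) = (a', k')) by (apply to_nat_inj, einj; congruence).
    injection Q as -> ->. congruence.
  - intros j k [k' [y [a [k'' E]]]]. injection E as -> _ _. exists (e (to_nat (a, k))).
    exists a, k. reflexivity.
  - intros y. split.
    + intros [x [a [k E]]]. injection E as _ ->.
      exists 0, (e (to_nat (to_nat (a, k), 0))), (to_nat (a, k)), 0. reflexivity.
    + intros [k [y' [a [k' E]]]]. injection E as -> _ _.
      destruct (of_nat a) as [a1 a2] eqn:Ea.
      exists (e a1, a2), a1, a2. rewrite <- Ea, cancel_to_of. reflexivity.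
Qed.

Lemma injection_of_infinite (C : J -> Prop) :
  (forall l : list J, exists j, C j /\ ~ In j l) ->
  exists e : nat -> J, Injective e /\ forall a, C (e a).
Proof.
  intros Hinf.
  destruct (choice _ Hinf) as [pick Hpick].
  set (prefix := fix prefix n := match n with 0 => [] | S n => pick (prefix n) :: prefix n end).
  assert (earlier : forall a b, a < b -> In (pick (prefix a)) (prefix b)).
  { intros a b Hab. induction b as [|b IH]; [lia|].
    destruct (Nat.eq_dec a b) as [->|ne]; [left; reflexivity|].
    right. apply IH. lia. }
  exists (fun n => pick (prefix n)). split; [|intros a; apply Hpick].
  intros a b E. destruct (lt_eq_lt_dec a b) as [[lt|eq]|gt]; auto; exfalso.
  - apply (proj2 (Hpick (prefix b))). rewrite <- E. apply earlier, lt.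
  - apply (proj2 (Hpick (prefix a))). rewrite E. apply earlier, gt.
Qed.

Lemma injection_of_finite (P : J -> Prop) (l : list J) :
  (forall j, P j -> In j l) ->
  exists c : J -> nat, forall a b, P a -> P b -> c a = c b -> a = b.
Proof.
  intros Hl.
  destruct (choice (fun j i => P j -> nth_error l i = Some j)) as [c Hc].
  { intros j. destruct (classic (P j)) as [Pj|nPj].
    - destruct (In_nth_error _ _ (Hl j Pj)) as [i Hi]. exists i; auto.
    - exists 0. tauto. }
  exists c. intros a b Pa Pb E.
  pose proof (Hc a Pa) as Ha. rewrite E, (Hc b Pb) in Ha. injection Ha; auto.
Qed.

Lemma maximal_pairing_cofinite (M : J * nat * J -> Prop) :
  pairing M ->
  (forall R, (forall t, M t -> R t) -> pairing R -> forall t, R t -> M t) ->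
  exists l, forall j, ~ pairing_dom M j -> In j l.
Proof.
  intros HM Mmax. apply NNPP. intros Hinf.
  destruct (injection_of_infinite (fun j => ~ pairing_dom M j)) as [e [einj eout]].
  { intros l. apply NNPP. intros Hl. apply Hinf. exists l. intros j Hj.
    apply NNPP. intros Hjl. apply Hl. exists j. auto. }
  set (E := fun t => exists a k, t = ((e a, k), e (to_nat (a, k)))).
  assert (HME : pairing (fun t => M t \/ E t)).
  { apply pairing_union; [exact HM | exact (pairing_of_injection e einj) |].
    intros j Mj [k [y [a [k' Ej]]]]. injection Ej as -> _ _. exact (eout a Mj). }
  apply (eout 0). exists 0, (e (to_nat (0, 0))).
  apply (Mmax _ (fun t Mt => or_introl Mt) HME). right. exists 0, 0. reflexivity.
Qed.

Lemma countable_or_absorbs_nat :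
  (exists h : J -> nat, Injective h) \/ (exists g : J * nat -> J, Injective g).
Proof.
  destruct (@classical_sets.Zorn_bigcup (J * nat * J) pairing) as [M [HM Mmax]].
  { intros F FP Ftot. apply pairing_chain_union; [exact FP|].
    intros R R' FR FR'. exact (Ftot R R' FR FR'). }
  destruct (maximal_pairing_cofinite M HM) as [l Hl].
  { intros R MR HR t Rt. apply NNPP. intros nMt. apply (Mmax R); [split|]; auto. }
  destruct (injection_of_finite (fun j => ~ pairing_dom M j) l Hl) as [c cinj].
  destruct HM as [Mfun [Minj [Mdom _]]].
  destruct (classic (exists d, pairing_dom M d)) as [[d Md]|empty].
  - right.
    destruct (choice (fun (p : J * nat) y => pairing_dom M (fst p) -> M (p, y))) as [psi Hpsi].
    { intros [j k]. destruct (classic (pairing_dom M j)) as [Mj|nMj].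
      - destruct (Mdom j k Mj) as [y ?]. exists y; auto.
      - exists d. simpl. tauto. }
    assert (psi_inj : forall p q, pairing_dom M (fst p) -> pairing_dom M (fst q) ->
                        psi p = psi q -> p = q).
    { intros p q Mp Mq E. apply (Minj _ _ (psi q)); [rewrite <- E|]; auto. }
    (* Odd second coordinates code [pairing_dom M × nat], even ones its finite complement. *)
    exists (fun p : J * nat => let (j, k) := p in
      if excluded_middle_informative (pairing_dom M j) then psi (j, 2 * k + 1)
      else psi (d, 2 * to_nat (c j, k))).
    intros [j k] [j' k'].
    destruct (excluded_middle_informative (pairing_dom M j)) as [Mj|nMj];
    destruct (excluded_middle_informative (pairing_dom M j')) as [Mj'|nMj'];
    intros E; apply psi_inj in E; auto;
    pose proof (f_equal snd E) as Ek; cbn [snd] in Ek; try lia.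
    + injection E as -> _. f_equal. lia.
    + assert (Ec : to_nat (c j, k) = to_nat (c j', k')) by lia.
      apply (f_equal of_nat) in Ec. rewrite !cancel_of_to in Ec. injection Ec as Ec ->.
      rewrite (cinj j j' nMj nMj' Ec). reflexivity.
  - left. exists c. intros a b. apply cinj; intros Ma; apply empty; eauto.
Qed.

End SelfProduct.

Lemma MA_countable_of_inj (K K' : Type) (h : K' -> K) :
  Injective h -> MA_countable K -> MA_countable K'.
Proof.
  intros hinj HK P le refl trans antisym cnt inh D dense.
  destruct (HK P le refl trans antisym cnt inh (fun k p => forall k', h k' = k -> D k' p))
    as [G [G0 [Gup [Gdir Gmeet]]]].
  - intros k p. destruct (classic (exists k', h k' = k)) as [[k' <-]|nk].
    + destruct (dense k' p) as [q [qp Dq]]. exists q. split; [exact qp|].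
      intros k'' E. apply hinj in E as ->. exact Dq.
    + exists p. split; [apply refl|]. intros k' E. exfalso. eauto.
  - exists G. split; [|split; [|split]]; auto.
    intros k'. destruct (Gmeet (h k')) as [p [Gp Dp]]. exists p. auto.
Qed.

Lemma rasiowa_sikorski (K : Type) (c : K -> nat) : Injective c -> MA_countable K.
Proof.
  intros cinj P le refl trans _ _ [p0] D dense.
  destruct (choice (fun (np : nat * P) q =>
              le q (snd np) /\ forall k, c k = fst np -> D k q)) as [step Hstep].
  { intros [n p]. destruct (classic (exists k, c k = n)) as [[k <-]|nk].
    - destruct (dense k p) as [q [qp Dq]]. exists q. split; [exact qp|].
      intros k' E. apply cinj in E as ->. exact Dq.
    - exists p. split; [apply refl|]. intros k E. exfalso. eauto. }
  set (chain := fix chain n := match n with 0 => p0 | S n => step (n, chain n) end).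
  assert (chain_dec : forall n m, n <= m -> le (chain m) (chain n)).
  { intros n m nm. induction nm as [|m _ IH]; [apply refl|].
    apply (trans _ (chain m)); [apply (Hstep (m, chain m))|exact IH]. }
  exists (fun p => exists n, le (chain n) p). split; [|split; [|split]].
  - exists p0, 0. apply refl.
  - intros p q [n pn] pq. exists n. eauto.
  - intros p q [n pn] [m qm]. exists (chain (max n m)). split; [exists (max n m); apply refl|].
    split; [apply (trans _ (chain n)) | apply (trans _ (chain m))]; auto; apply chain_dec; lia.
  - intros k. exists (chain (S (c k))). split; [exists (S (c k)); apply refl|].
    apply (Hstep (c k, chain (c k))). reflexivity.
Qed.

Lemma MA_countable_prod_nat (J : Type) :
  (forall (K : Type) (h : K -> J), Injective h -> MA_countable K) -> MA_countable (J * nat).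
Proof.
  intros HMA. destruct (countable_or_absorbs_nat J) as [[h hinj]|[g ginj]].
  - apply (rasiowa_sikorski _ (fun p => to_nat (h (fst p), snd p))).
    intros [j k] [j' k'] E. apply (f_equal of_nat) in E. rewrite !cancel_of_to in E.
    injection E as E ->. apply hinj in E as ->. reflexivity.
  - exact (HMA _ g ginj).
Qed.

Definition extends (q p : list nat) : Prop := exists r, q = p ++ r.

Lemma extends_refl (p : list nat) : extends p p.
Proof. exists []. rewrite app_nil_r. reflexivity. Qed.

Lemma extends_nth_error (q p : list nat) (i v : nat) :
  extends q p -> nth_error p i = Some v -> nth_error q i = Some v.
Proof.
  intros [r ->] H. rewrite nth_error_app1; auto.
  apply nth_error_Some. congruence.
Qed.

Lemma extends_with (s : list nat) (L : nat) (g : nat -> nat) :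
  exists s', extends s' s /\ forall i, length s <= i < L -> nth_error s' i = Some (g i).
Proof.
  exists (s ++ map g (seq (length s) (L - length s))). split; [eexists; reflexivity|].
  intros i Hi. rewrite nth_error_app2 by lia.
  rewrite nth_error_map, nth_error_seq.
  destruct (Nat.ltb_spec (i - length s) (L - length s)); [|lia].
  simpl. do 2 f_equal. lia.
Qed.

Fixpoint encode_list (l : list nat) : nat :=
  match l with [] => 0 | x :: l => S (to_nat (x, encode_list l)) end.

Lemma encode_list_inj : Injective encode_list.
Proof.
  intros a. induction a as [|x a IH]; intros [|y b] E; try discriminate; auto.
  apply (f_equal pred) in E. cbn [pred encode_list] in E.
  apply (f_equal of_nat) in E. rewrite !cancel_of_to in E.
  injection E as -> E. f_equal. auto.
Qed.

Lemma generic_sequences (K : Type) : MA_countable K ->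
  forall D : K -> list nat -> Prop, (forall k p, exists q, extends q p /\ D k q) ->
  exists G : list nat -> Prop,
    (forall p q, G p -> G q -> exists r, G r /\ extends r p /\ extends r q) /\
    (forall k, exists p, G p /\ D k p).
Proof.
  intros HMA D dense.
  destruct (HMA (list nat) extends) with (D := D) as [G [_ [_ [Gdir Gmeet]]]]; auto.
  - exact extends_refl.
  - intros p q r [a ->] [b ->]. exists (b ++ a). rewrite app_assoc. reflexivity.
  - intros p q [a ->] [b E]. rewrite <- app_assoc in E.
    assert (Eab : a ++ b = []).
    { apply length_zero_iff_nil. apply (f_equal (@length nat)) in E.
      rewrite !length_app in E. rewrite length_app. lia. }
    apply app_eq_nil in Eab as [-> _]. apply app_nil_r.
  - exists encode_list. exact encode_list_inj.
  - constructor. exact [].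
  - exists G. auto.
Qed.

Section Coloring.
Variables (X : Type) (fX : nat -> X) (inv : X -> nat).
Hypothesis fX_inv : forall x, fX (inv x) = x.

(* A sequence [s] colours [x] with [v] when [nth_error s (inv x) = Some v]. *)
Definition agrees (s : list nat) (C : X -> Prop) (m : nat) (B : X -> Prop) : Prop :=
  forall x v, nth_error s (inv x) = Some v -> C x -> (B x <-> v = m).

Lemma coloured_points (s : list nat) (P : X -> nat -> Prop) :
  exists l, forall x, In x l <-> exists v, nth_error s (inv x) = Some v /\ P x v.
Proof.
  destruct (filter_prop (fun x => exists v, nth_error s (inv x) = Some v /\ P x v)
              (map fX (seq 0 (length s)))) as [l Hl].
  exists l. intros x. rewrite Hl. split; [tauto|]. intros Hx. split; [|exact Hx].
  destruct Hx as [v [Hv _]]. rewrite <- (fX_inv x). apply in_map, in_seq.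
  assert (inv x < length s) by (apply nth_error_Some; congruence). lia.
Qed.

Lemma extend_to_avoid (C : X -> Prop) (N : (X -> Prop) -> Prop) (m : nat) :
  nowhere_dense_in_cantor C N ->
  forall s, exists s', extends s' s /\ forall B, subset B C -> agrees s' C m B -> ~ N B.
Proof.
  intros HN s.
  destruct (coloured_points s (fun x v => C x /\ v = m)) as [pos Hpos].
  destruct (coloured_points s (fun x v => C x /\ v <> m)) as [neg Hneg].
  assert (Hbc : basic_cond C pos neg).
  { split; [|split].
    - intros x Hx. apply Hpos in Hx as [v [_ [Cx _]]]. exact Cx.
    - intros x Hx. apply Hneg in Hx as [v [_ [Cx _]]]. exact Cx.
    - intros x Hx Hx'. apply Hpos in Hx as [v [Hv [_ vm]]].
      apply Hneg in Hx' as [v' [Hv' [_ v'm]]]. congruence. }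
  destruct (HN pos neg Hbc) as [pos' [neg' [[Cpos' [Cneg' disj']] [pos_sub [neg_sub avoid]]]]].
  set (L := S (list_max (map inv (pos' ++ neg')))).
  assert (below_L : forall x, In x (pos' ++ neg') -> inv x < L).
  { intros x Hx. assert (H : Forall (fun k => k <= list_max (map inv (pos' ++ neg')))
                                    (map inv (pos' ++ neg'))) by (apply list_max_le; reflexivity).
    apply Forall_forall with (x := inv x) in H; [unfold L; lia | apply in_map, Hx]. }
  destruct (extends_with s L (fun i => if excluded_middle_informative (In (fX i) pos')
                                         then m else S m)) as [s' [ext new]].
  assert (colour : forall x, In x (pos' ++ neg') ->
                     exists v, nth_error s' (inv x) = Some v /\ (v = m <-> In x pos')).
  { intros x Hx. assert (Cx : C x) by (apply in_app_or in Hx as [?|?]; auto).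
    destruct (nth_error s (inv x)) as [v|] eqn:Ev.
    - exists v. split; [exact (extends_nth_error _ _ _ _ ext Ev)|]. split.
      + intros ->. apply pos_sub, Hpos. eauto.
      + intros Hp. apply NNPP. intros vm. apply (disj' x Hp), neg_sub, Hneg. eauto.
    - apply nth_error_None in Ev.
      exists (if excluded_middle_informative (In (fX (inv x)) pos') then m else S m).
      split; [apply new; split; auto|].
      rewrite fX_inv. destruct (excluded_middle_informative (In x pos'));
        split; intros; solve [auto | tauto | exfalso; lia]. }
  exists s'. split; [exact ext|]. intros B BC HB. apply avoid; [exact BC|]. split.
  - intros x Hx. destruct (colour x) as [v [Hv vm]]; [apply in_or_app; auto|].
    apply (HB x v Hv (Cpos' x Hx)), vm, Hx.
  - intros x Hx Bx. destruct (colour x) as [v [Hv vm]]; [apply in_or_app; auto|].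
    apply (disj' x); [apply vm, (HB x v Hv (Cneg' x Hx)), Bx | exact Hx].
Qed.

Lemma coloring_with_positive_classes (J : Type) (I : (X -> Prop) -> Prop)
    (C : J -> X -> Prop) :
  hereditarily_meager I -> MA_countable (J * (nat * nat)) ->
  exists f : X -> nat, forall j m, ~ I (C j) -> ~ I (fun x => C j x /\ f x = m).
Proof.
  intros HM HMA.
  destruct (choice (fun j (N : nat -> (X -> Prop) -> Prop) => ~ I (C j) ->
              (forall n, nowhere_dense_in_cantor (C j) (N n)) /\
              (forall B, subset B (C j) -> I B -> exists n, N n B))) as [N HN].
  { intros j. destruct (classic (I (C j))) as [Ij|nIj].
    - exists (fun _ _ => False). tauto.
    - destruct (HM (C j) nIj) as [N [Nnd Ncov]]. exists N. intros _.
      split; [exact Nnd|]. intros B BC IB. apply Ncov; auto. }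
  set (D := fun (k : J * (nat * nat)) s => let '(j, (m, n)) := k in
              ~ I (C j) -> forall B, subset B (C j) -> agrees s (C j) m B -> ~ N j n B).
  destruct (generic_sequences _ HMA D) as [G [Gdir Gmeet]].
  { intros [j [m n]] s. destruct (classic (I (C j))) as [Ij|nIj].
    - exists s. split; [apply extends_refl|]. simpl. tauto.
    - destruct (extend_to_avoid (C j) (N j n) m (proj1 (HN j nIj) n) s) as [s' [ext avoid]].
      exists s'. split; [exact ext|]. intros _. exact avoid. }
  set (f := fun x => epsilon (inhabits 0)
                       (fun v => exists s, G s /\ nth_error s (inv x) = Some v)).
  assert (f_spec : forall s x v, G s -> nth_error s (inv x) = Some v -> f x = v).
  { intros s x v Gs Hv.
    destruct (epsilon_spec (inhabits 0) (fun v => exists s, G s /\ nth_error s (inv x) = Some v))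
      as [s' [Gs' Hs']]; [eauto|].
    fold (f x) in Hs'. destruct (Gdir s s' Gs Gs') as [r [_ [rs rs']]].
    apply (extends_nth_error r) in Hv; [|exact rs].
    apply (extends_nth_error r) in Hs'; [|exact rs']. congruence. }
  exists f. intros j m nIj Iclass.
  destruct (proj2 (HN j nIj) (fun x => C j x /\ f x = m)) as [n Nn];
    [intros x [Cx _]; exact Cx | exact Iclass |].
  destruct (Gmeet (j, (m, n))) as [s [Gs Ds]].
  apply (Ds nIj (fun x => C j x /\ f x = m)); [intros x [Cx _]; exact Cx| |exact Nn].
  intros x v Hv Cx. rewrite (f_spec s x v Gs Hv). tauto.
Qed.

End Coloring.

Lemma positive_basic_trace (X J : Type) (I T : (X -> Prop) -> Prop) (b : J -> X -> Prop)
    (A U : X -> Prop) (x : X) :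
  is_base T b -> IT_crowded I T A -> T U -> A x -> U x ->
  exists j, ~ I (inter A (b j)) /\ subset (b j) U.
Proof.
  intros [bT bbase] HA HU Ax Ux.
  destruct (bbase U x HU Ux) as [j [bx bU]]. exists j. split; [|exact bU].
  destruct (HA (b j) (bT j)) as [empty|pos]; [|exact pos].
  exfalso. apply (empty x). split; assumption.
Qed.

Theorem mainTheorem2 (X : Type) (I T : (X -> Prop) -> Prop) (A : X -> Prop) :
  countably_infinite X ->
  is_ideal I ->
  hereditarily_meager I ->
  is_topology T ->
  I_crowded_topology I T ->
  weight_lt_mc T ->
  IT_crowded I T A ->
  exists Am : nat -> X -> Prop,
    (forall x, A x <-> exists m, Am m x) /\
    (forall m n x, Am m x -> Am n x -> m = n) /\
    (forall m, IT_crowded I T (Am m)) /\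
    (forall m, dense_in T (Am m) A).
Proof.
  intros [fX [_ fX_onto]] [I_down [_ [_ I_finite]]] HM _ _ [J [b [Hbase HMA]]] HA.
  destruct (choice (fun x n => fX n = x) fX_onto) as [inv fX_inv].
  assert (MA : MA_countable (J * (nat * nat))).
  { apply (MA_countable_of_inj (J * nat) _ (fun p => (fst p, to_nat (snd p)))).
    - intros [j p] [j' p'] E. injection E as -> E.
      rewrite <- (cancel_of_to p), <- (cancel_of_to p'), E. reflexivity.
    - apply MA_countable_prod_nat, HMA. }
  destruct (coloring_with_positive_classes X fX inv fX_inv J I (fun j => inter A (b j)) HM MA)
    as [f Hf].
  set (Am := fun m x => A x /\ f x = m).
  assert (positive : forall m U, T U -> (exists x, A x /\ U x) -> ~ I (inter (Am m) U)).
  { intros m U HU [x [Ax Ux]] IU.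
    destruct (positive_basic_trace X J I T b A U x Hbase HA HU Ax Ux) as [j [nIj bU]].
    apply (Hf j m nIj), (I_down _ _ IU). intros y [[Ay By] fy]. split; [split|]; auto. }
  exists Am. split; [|split; [|split]].
  - intros x. split; [intros Ax; exists (f x); split; auto | intros [m [Ax _]]; exact Ax].
  - intros m n x [_ <-] [_ <-]. reflexivity.
  - intros m U HU. destruct (classic (exists x, Am m x /\ U x)) as [[x [[Ax _] Ux]]|none].
    + right. apply positive; eauto.
    + left. intros x Hx. apply none. exists x. exact Hx.
  - intros m U HU meets. apply NNPP. intros none. apply (positive m U HU meets), I_finite.
    exists []. intros x Hx. apply none. exists x. exact Hx.
Qed.
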